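(* In the setting of the context, assume further that $\theta^*_i\ne\theta^*_0$ for $1\le i\le d$. Then the graph $\Delta$ is connected.
   Context: Let $\mathbb F$ be a field, $d\ge1$ an integer, $V$ a vector space over $\mathbb F$ of dimension $d+1$, $\mathcal A=\mathrm{End}(V)$ with identity $I$. Let $E^*_0,\dots,E^*_d\in\mathcal A$ satisfy $E^*_iE^*_j=\delta_{i,j}E^*_i$ and $\mathrm{rank}(E^*_i)=1$ for $0\le i,j\le d$. Let $A\in\mathcal A$ satisfy $E^*_iAE^*_j=0$ if $|i-j|>1$ and $E^*_iAE^*_j\neq0$ if $|i-j|=1$. Assume $A$ is multiplicity-free, i.e. has $d+1$ mutually distinct eigenvalues $\theta_0,\dots,\theta_d$ in $\mathbb F$, and let $E_i=\prod_{j\ne i}\frac{A-\theta_jI}{\theta_i-\theta_j}$ be the primitive idempotent of $A$ for $\theta_i$. Let $\theta^*_0,\dots,\theta^*_d\in\mathbb F$ and $A^*=\sum_{i=0}^d\theta^*_iE^*_i$. Let $\Delta$ be the graph on vertex set $\{0,1,\dots,d\}$ in which $i,j$ are adjacent iff $i\ne j$ and $E_iA^*E_j\neq0$ (this relation is symmetric). *)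

(* V = F^(d+1), End(V) = 'M[F]_(d.+1); indices 0..d are 'I_(d.+1). *)
From HB Require Import structures.
From mathcomp Require Import all_boot all_order all_algebra.
Set Implicit Arguments. Unset Strict Implicit. Unset Printing Implicit Defensive.
Import GRing.Theory.
Local Open Scope ring_scope.

Definition prim_idem (F : fieldType) (d : nat) (A : 'M[F]_(d.+1))
  (theta : 'I_(d.+1) -> F) (i : 'I_(d.+1)) : 'M[F]_(d.+1) :=
  \prod_(j < d.+1 | j != i) ((theta i - theta j)^-1 *: (A - (theta j)%:M)).

Definition dual_mat (F : fieldType) (d : nat) (Estar : 'I_(d.+1) -> 'M[F]_(d.+1))
  (thetas : 'I_(d.+1) -> F) : 'M[F]_(d.+1) :=
  \sum_(i < d.+1) thetas i *: Estar i.

Definition Delta_adj (F : fieldType) (d : nat) (A : 'M[F]_(d.+1))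
  (theta : 'I_(d.+1) -> F) (Estar : 'I_(d.+1) -> 'M[F]_(d.+1))
  (thetas : 'I_(d.+1) -> F) : rel 'I_(d.+1) :=
  fun i j => (i != j) &&
    (prim_idem A theta i *m dual_mat Estar thetas *m prim_idem A theta j != 0).

Definition graph_connected (T : finType) (e : rel T) : Prop :=
  forall x y : T, connect e x y.

(* Each rank-one idempotent E*_i factors as c_i r_i (column times row),
   and orthogonality makes (r_i), (c_j) dual bases; the hypotheses on A say
   that the matrix of coefficients r_i A c_j is irreducible tridiagonal.
   Hence the rows r_0 A^k and the columns A^k c_0 (0 <= k <= d) are bases
   ("Krylov bases").  If Delta were disconnected, let S be the component of
   a vertex and P the sum of the E_i, i in S.  Then P commutes with A, and
   since E_i A* E_j = 0 across the cut, P A* = P A* P.  This identity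
   passes to the polynomial E*_0 = prod_(j<>0) (A* - theta*_j)/(theta*_0 -
   theta*_j) in A*, so P c_0 r_0 = P c_0 r_0 P.  Either P c_0 = 0, and P
   kills the Krylov basis A^k c_0, so P = 0; or r_0 P = r_0, and I - P kills
   the Krylov basis r_0 A^k, so P = I.  Both contradict E_i <> 0. *)

From HB Require Import structures.
From mathcomp Require Import all_boot all_order all_algebra.
From mathcomp Require Import zify.
Set Implicit Arguments. Unset Strict Implicit. Unset Printing Implicit Defensive.
Import GRing.Theory.
Local Open Scope ring_scope.

Lemma eigen_prod_scale (F : fieldType) (n m : nat) (B : 'M[F]_n.+1)
    (v : 'M[F]_(m, n.+1)) (a : F) (I : Type) (s : seq I) (P : pred I)
    (f g : I -> F) :
  v *m B = a *: v ->
  v *m \prod_(j <- s | P j) (f j *: (B - (g j)%:M)) =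
  (\prod_(j <- s | P j) (f j * (a - g j))) *: v.
Proof.
move=> hv; apply: (big_rec2 (fun X t => v *m X = t *: v)).
  by rewrite mulmx1 scale1r.
move=> j X t _ IH.
rewrite -mulmxE mulmxA -scalemxAr mulmxBr hv mul_mx_scalar -scalerBl.
by rewrite -!scalemxAl IH !scalerA.
Qed.

Lemma prim_idem_eigen (F : fieldType) (n m : nat) (B : 'M[F]_n.+1)
    (theta : 'I_n.+1 -> F) (i k : 'I_n.+1) (v : 'M[F]_(m, n.+1)) :
  (forall j, j != i -> theta j != theta i) -> v *m B = theta k *: v ->
  v *m prim_idem B theta i = (if k == i then 1 else 0) *: v.
Proof.
move=> sep_i hv; rewrite /prim_idem (eigen_prod_scale _ _ _ _ hv).
case: (eqVneq k i) => [->|neq_ki].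
  by rewrite big1 // => j hj; rewrite mulVf // subr_eq0 eq_sym sep_i.
by rewrite (bigD1 k) //= subrr mulr0 mul0r scale0r.
Qed.

(* For an idempotent P, the condition P B = P B P (i.e. P B (1 - P) = 0) is
   inherited by every product of affine expressions in B, in particular by
   prim_idem B theta i. *)
Lemma prim_idem_left_stable (F : fieldType) (n : nat) (B P : 'M[F]_n.+1)
    (theta : 'I_n.+1 -> F) (i : 'I_n.+1) :
  P *m P = P -> P *m B = P *m B *m P ->
  P *m prim_idem B theta i = P *m prim_idem B theta i *m P.
Proof.
move=> idemP stableB; apply: (big_ind (fun X => P *m X = P *m X *m P)).
- by rewrite mulmx1 idemP.
- move=> X Y stableX stableY; rewrite -!mulmxE.
  rewrite [LHS](_ : _ = P *m X *m P *m Y); last by rewrite -stableX mulmxA.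
  by rewrite -(mulmxA _ P Y) stableY !mulmxA -stableX.
- move=> j _; rewrite -scalemxAr -!scalemxAl mulmxBr mul_mx_scalar.
  by rewrite mulmxBl -scalemxAl idemP -stableB.
Qed.

Lemma dual_mat_eigen (F : fieldType) (d : nat)
    (Estar : 'I_d.+1 -> 'M[F]_d.+1) (thetas : 'I_d.+1 -> F) (k : 'I_d.+1) :
  (forall i j, Estar i *m Estar j = if i == j then Estar i else 0) ->
  Estar k *m dual_mat Estar thetas = thetas k *: Estar k.
Proof.
move=> orthE; rewrite /dual_mat mulmx_sumr (bigD1 k) //= big1 ?addr0.
  by rewrite -scalemxAr orthE eqxx.
by move=> i hi; rewrite -scalemxAr orthE eq_sym (negbTE hi) scaler0.
Qed.

Lemma dual_mat_prim_idem (F : fieldType) (d : nat)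
    (Estar : 'I_d.+1 -> 'M[F]_d.+1) (thetas : 'I_d.+1 -> F) (i : 'I_d.+1) :
  (forall i j, Estar i *m Estar j = if i == j then Estar i else 0) ->
  \sum_k Estar k = 1%:M ->
  (forall j, j != i -> thetas j != thetas i) ->
  prim_idem (dual_mat Estar thetas) thetas i = Estar i.
Proof.
move=> orthE sumE sep_i; have eigE k := dual_mat_eigen thetas k orthE.
rewrite -[LHS]mul1mx -sumE mulmx_suml (bigD1 i) //= big1 ?addr0.
  by rewrite (prim_idem_eigen sep_i (eigE i)) eqxx scale1r.
by move=> k hk; rewrite (prim_idem_eigen sep_i (eigE k)) (negbTE hk) scale0r.
Qed.

Section PartialSums.

Variables (F : fieldType) (I : finType) (n : nat) (E : I -> 'M[F]_n).
Hypothesis orthE : forall i j, E i *m E j = if i == j then E i else 0.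
Variable S : {set I}.

Let P := \sum_(i in S) E i.

Lemma partial_sum_mem i : i \in S -> P *m E i = E i.
Proof.
move=> iS; rewrite mulmx_suml (bigD1 i iS) /= orthE eqxx big1 ?addr0 //.
by move=> j /andP [_ hji]; rewrite orthE (negbTE hji).
Qed.

Lemma partial_sum_nmem i : i \notin S -> P *m E i = 0.
Proof.
move=> iNS; rewrite mulmx_suml big1 // => j jS; rewrite orthE.
by case: (eqVneq j i) jS => // ->; rewrite (negbTE iNS).
Qed.

Lemma partial_sum_idem : P *m P = P.
Proof. by rewrite {2}/P mulmx_sumr; apply: eq_bigr => i; apply: partial_sum_mem. Qed.

Lemma partial_sum_comm X : (forall i, E i *m X = X *m E i) -> P *m X = X *m P.
Proof. by move=> commE; rewrite mulmx_suml mulmx_sumr; apply: eq_bigr. Qed.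

Lemma partial_sum_cut X :
  \sum_i E i = 1%:M ->
  (forall i j, i \in S -> j \notin S -> E i *m X *m E j = 0) ->
  P *m X = P *m X *m P.
Proof.
move=> sumE noedge.
have splitI : P + \sum_(j | j \notin S) E j = 1%:M by rewrite -sumE [RHS](bigID (mem S)).
have cutX : P *m X *m \sum_(j | j \notin S) E j = 0.
  rewrite mulmx_sumr big1 // => j jNS; rewrite !mulmx_suml big1 // => i iS.
  exact: noedge.
by rewrite -[LHS]mulmx1 -splitI mulmxDr cutX addr0.
Qed.

End PartialSums.

Section EigenBasis.

Variables (F : fieldType) (d : nat) (A : 'M[F]_d.+1) (theta : 'I_d.+1 -> F).
Hypothesis theta_inj : injective theta.
Variable v : 'I_d.+1 -> 'rV[F]_d.+1.
Hypothesis v_eigen : forall k, v k *m A = theta k *: v k.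
Hypothesis v_neq0 : forall k, v k != 0.

Let E := prim_idem A theta.

Lemma prim_idem_eigvec k i : v k *m E i = (if k == i then 1 else 0) *: v k.
Proof.
apply: prim_idem_eigen (v_eigen k) => j; apply: contra => /eqP /theta_inj ->.
exact: eqxx.
Qed.

(* The v_k form a basis of row vectors, so a matrix is determined by its
   values on them. *)
Lemma eigvec_cancel (X Y : 'M[F]_d.+1) : (forall k, v k *m X = v k *m Y) -> X = Y.
Proof.
move=> eqXY; pose W : 'M_d.+1 := \matrix_(k, l) v k 0 l.
have rowW k : row k W = v k by apply/rowP => l; rewrite !mxE.
have unitW : W \in unitmx.
  rewrite unitmxE unitfE; apply/det0P => -[u u_neq0 uW]; move/negP: u_neq0; apply.
  apply/eqP/rowP => i; rewrite [RHS]mxE.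
  have := congr1 (fun w : 'rV_d.+1 => w *m E i) uW; rewrite mul0mx (mulmx_sum_row u W).
  rewrite mulmx_suml (bigD1 i) //= big1 ?addr0 => [|k hk]; last first.
    by rewrite -scalemxAl rowW prim_idem_eigvec (negbTE hk) scale0r scaler0.
  rewrite -scalemxAl rowW prim_idem_eigvec eqxx scale1r => /eqP.
  by rewrite scaler_eq0 (negbTE (v_neq0 i)) orbF => /eqP.
have WXY : W *m X = W *m Y by apply/row_matrixP => k; rewrite !row_mul rowW eqXY.
by rewrite -(mulKmx unitW X) WXY mulKmx.
Qed.

Lemma prim_idem_orth i j : E i *m E j = if i == j then E i else 0.
Proof.
apply: eigvec_cancel => k.
rewrite mulmxA prim_idem_eigvec -scalemxAl prim_idem_eigvec scalerA.
case: (eqVneq i j) => [<-|neq_ij].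
  by rewrite prim_idem_eigvec; case: (k == i); rewrite ?mulr1 ?mul0r.
rewrite mulmx0; case: (eqVneq k i) => [->|_]; last by rewrite mul0r scale0r.
by rewrite (negbTE neq_ij) mulr0 scale0r.
Qed.

Lemma prim_idem_sum : \sum_i E i = 1%:M.
Proof.
apply: eigvec_cancel => k; rewrite mulmx_sumr mulmx1 (bigD1 k) //= big1 ?addr0.
  by rewrite prim_idem_eigvec eqxx scale1r.
by move=> i hi; rewrite prim_idem_eigvec eq_sym (negbTE hi) scale0r.
Qed.

Lemma prim_idem_commA i : E i *m A = A *m E i.
Proof.
apply: eigvec_cancel => k; rewrite !mulmxA prim_idem_eigvec v_eigen -!scalemxAl.
by rewrite v_eigen prim_idem_eigvec !scalerA mulrC.
Qed.

Lemma prim_idem_neq0 i : E i != 0.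
Proof.
apply/eqP => E0; have := prim_idem_eigvec i i; rewrite E0 mulmx0 eqxx scale1r.
by move/esym/eqP; rewrite (negbTE (v_neq0 i)).
Qed.

End EigenBasis.

Lemma left_eigenbasis (F : fieldType) (n : nat) (A : 'M[F]_n) (I : finType)
    (theta : I -> F) :
  (forall i, eigenvalue A (theta i)) ->
  exists v : I -> 'rV_n, forall i, v i *m A = theta i *: v i /\ v i != 0.
Proof.
move=> eigA.
apply: (@fin_all_exists _ (fun=> 'rV_n)
  (fun i w => w *m A = theta i *: w /\ w != 0)) => i.
by have /eigenvalueP [w w_eigen w_neq0] := eigA i; exists w.
Qed.

Lemma col_mulmx_eq0 (F : fieldType) (n m : nat) (c : 'cV[F]_n) (Y : 'M[F]_(1, m)) :
  c != 0 -> (c *m Y == 0) = (Y == 0).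
Proof.
move=> c_neq0; rewrite -trmx_eq0 trmx_mul mulmx_free_eq0 ?trmx_eq0 //.
by rewrite /row_free rank_rV trmx_eq0 c_neq0.
Qed.

Lemma rank1_sandwich_eq0 (F : fieldType) (n m : nat) (c : 'cV[F]_n)
    (X : 'M[F]_1) (r : 'rV[F]_m) :
  c != 0 -> r != 0 -> (c *m X *m r == 0) = (X 0 0 == 0).
Proof.
move=> c_neq0 r_neq0; rewrite -mulmxA col_mulmx_eq0 // mulmx_free_eq0; last first.
  by rewrite /row_free rank_rV r_neq0.
apply/eqP/eqP => [->|X0]; first by rewrite mxE.
by rewrite [X]mx11_scalar X0 raddf0.
Qed.

Lemma rank1_factor (F : fieldType) (n : nat) (M : 'M[F]_n) :
  \rank M = 1%N -> exists c : 'cV_n, exists r : 'rV_n, M = c *m r.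
Proof.
move=> rankM; move: (col_base M) (row_base M) (mulmx_base M); rewrite rankM.
by move=> c r <-; exists c, r.
Qed.

Lemma rank1_dual_basis (F : fieldType) (I : finType) (n : nat)
    (Estar : I -> 'M[F]_n) :
  (forall i j, Estar i *m Estar j = if i == j then Estar i else 0) ->
  (forall i, \rank (Estar i) = 1%N) ->
  exists c : I -> 'cV_n, exists r : I -> 'rV_n,
    (forall i, Estar i = c i *m r i) /\
    (forall i j, r i *m c j = (i == j)%:R%:M).
Proof.
move=> orthE rankE.
have [cr Ecr] : exists cr : I -> 'cV_n * 'rV_n, forall i, Estar i = (cr i).1 *m (cr i).2.
  apply: (@fin_all_exists _ (fun=> ('cV_n * 'rV_n)%type)
    (fun i cr => Estar i = cr.1 *m cr.2)) => i.
  by have [c [r ->]] := rank1_factor (rankE i); exists (c, r).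
exists (fun i => (cr i).1), (fun i => (cr i).2); split => // i j.
have factors_neq0 k : (cr k).1 != 0 /\ (cr k).2 != 0.
  have Ek_neq0 : Estar k != 0 by rewrite -mxrank_eq0 rankE.
  by split; apply: contraNneq Ek_neq0 => f0; rewrite Ecr f0 ?mul0mx ?mulmx0.
have sandwich0 : (cr i).1 *m ((cr i).2 *m (cr j).1 - (i == j)%:R%:M) *m (cr j).2 = 0.
  rewrite mulmxBr mulmxBl mul_mx_scalar -scalemxAl !mulmxA -Ecr -mulmxA -!Ecr orthE.
  by case: eqVneq => [->|_]; rewrite ?scale1r ?Ecr ?subrr // scale0r subr0.
have [ci_neq0 _] := factors_neq0 i; have [_ rj_neq0] := factors_neq0 j.
move/eqP: sandwich0; rewrite rank1_sandwich_eq0 // => /eqP coeff0.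
by apply/eqP; rewrite -subr_eq0 [_ - _]mx11_scalar coeff0 raddf0.
Qed.

Lemma dual_basis_neq0 (F : fieldType) (I : finType) (n : nat)
    (c : I -> 'cV[F]_n) (r : I -> 'rV[F]_n) (k : I) :
  (forall i j, r i *m c j = (i == j)%:R%:M) -> c k != 0 /\ r k != 0.
Proof.
move=> dual; have rc_neq0 : r k *m c k != 0 by rewrite dual eqxx matrix_nonzero1.
by split; apply: contraNneq rc_neq0 => ->; rewrite ?mulmx0 ?mul0mx.
Qed.

Lemma dual_basis_sum (F : fieldType) (n : nat) (c : 'I_n -> 'cV[F]_n)
    (r : 'I_n -> 'rV[F]_n) :
  (forall i j, r i *m c j = (i == j)%:R%:M) -> \sum_i c i *m r i = 1%:M.
Proof.
move=> dual; pose R := \matrix_(i, l) r i 0 l; pose C := \matrix_(l, j) c j l 0.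
have RC : R *m C = 1%:M.
  apply/matrixP => i j; have := congr1 (fun M : 'M_1 => M 0 0) (dual i j).
  by rewrite !mxE eqxx mulr1n => <-; apply: eq_bigr => l _; rewrite !mxE.
rewrite -(mulmx1C RC); apply/matrixP => a b; rewrite summxE !mxE.
by apply: eq_bigr => i _; rewrite !mxE big_ord1.
Qed.

Section KrylovBasis.

Variables (F : fieldType) (d : nat) (A : 'M[F]_d.+1).
Variables (c : 'I_d.+1 -> 'cV[F]_d.+1) (r : 'I_d.+1 -> 'rV[F]_d.+1).
Hypothesis dual : forall i j, r i *m c j = (i == j)%:R%:M.
Hypothesis tridiag0 : forall i j : 'I_d.+1,
  (1 < `|(i : int) - (j : int)|)%N -> (r i *m A *m c j) 0 0 = 0.
Hypothesis tridiag1 : forall i j : 'I_d.+1,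
  `|(i : int) - (j : int)|%N = 1%N -> (r i *m A *m c j) 0 0 != 0.

Let krylov (k : nat) (j : 'I_d.+1) := (r ord0 *m A ^+ k *m c j) 0 0.

Lemma krylov_rec k j :
  krylov k.+1 j = \sum_i krylov k i * (r i *m A *m c j) 0 0.
Proof.
rewrite /krylov exprSr -mulmxE.
have -> : r ord0 *m (A ^+ k *m A) *m c j =
    r ord0 *m A ^+ k *m (\sum_i c i *m r i) *m A *m c j.
  by rewrite dual_basis_sum // mulmx1 !mulmxA.
rewrite mulmx_sumr !mulmx_suml summxE; apply: eq_bigr => i _.
by rewrite !mulmxA -(mulmxA _ (r i)) -(mulmxA _ (r i *m A)) [LHS]mxE big_ord1.
Qed.

Lemma krylov_triangular k : (k <= d)%N ->
  (forall j : 'I_d.+1, (k < j)%N -> krylov k j = 0) /\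
  (forall j : 'I_d.+1, j = k :> nat -> krylov k j != 0).
Proof.
elim: k => [|k IH] le_kd.
  have krylov0 j : krylov 0 j = (ord0 == j)%:R.
    by rewrite /krylov expr0 mulmx1 dual mxE eqxx mulr1n.
  split=> j hj; rewrite krylov0.
    by rewrite (_ : (ord0 == j) = false) //; apply/negbTE; rewrite -val_eqE /= neq_ltn hj.
  by rewrite (_ : (ord0 == j) = true) ?oner_neq0 //; apply/eqP/val_inj.
have [above0 diag_neq0] := IH (ltnW le_kd).
split=> j hj; rewrite krylov_rec.
  rewrite big1 // => i _; case: (ltnP k i) => [lt_ki|le_ik].
    by rewrite above0 // mul0r.
  by rewrite tridiag0 ?mulr0 //; lia.
rewrite (bigD1 (Ordinal (leqW le_kd))) //= big1 ?addr0.
  by rewrite mulf_neq0 ?diag_neq0 ?tridiag1 //=; lia.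
move=> i neq_ik; case: (ltnP k i) => [lt_ki|le_ik]; first by rewrite above0 // mul0r.
have lt_ik : (i < k)%N.
  rewrite ltn_neqAle le_ik andbT; apply: contra neq_ik => /eqP eq_ik.
  by apply/eqP/val_inj.
by rewrite tridiag0 ?mulr0 //; lia.
Qed.

Lemma krylov_row_annihilator m (X : 'M[F]_(d.+1, m)) :
  (forall k : 'I_d.+1, r ord0 *m A ^+ k *m X = 0) -> X = 0.
Proof.
move=> killX.
pose W := \matrix_(k < d.+1, l < d.+1) (r ord0 *m A ^+ k) 0 l.
pose C := \matrix_(l < d.+1, j < d.+1) c j l 0.
have WC : W *m C = \matrix_(k, j) krylov k j.
  apply/matrixP => k j; rewrite !mxE /krylov mxE.
  by apply: eq_bigr => l _; rewrite !mxE.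
have unitW : W \in unitmx.
  suff : W *m C \in unitmx by rewrite unitmx_mul => /andP [].
  rewrite unitmxE unitfE WC det_trig; last first.
    apply/is_trig_mxP => k j lt_kj; rewrite mxE.
    by have [-> //] := krylov_triangular (ltn_ord k).
  rewrite prodf_seq_neq0; apply/allP => k _; apply/implyP => _; rewrite mxE.
  by have [_ ->] := krylov_triangular (ltn_ord k).
have WX : W *m X = 0.
  apply/row_matrixP => k; rewrite row_mul row0 -(killX k); congr (_ *m _).
  by apply/rowP => l; rewrite !mxE.
by rewrite -(mulKmx unitW X) WX mulmx0.
Qed.

End KrylovBasis.

Lemma trmxX (R : comPzRingType) (n : nat) (A : 'M[R]_n.+1) (k : nat) :
  (A ^+ k)^T = A^T ^+ k.
Proof.
elim: k => [|k IH]; first by rewrite !expr0 trmx1.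
by rewrite exprSr exprS -IH -!mulmxE trmx_mul.
Qed.

Section Splitting.

Variables (F : fieldType) (d : nat) (A : 'M[F]_d.+1).
Variables (c : 'I_d.+1 -> 'cV[F]_d.+1) (r : 'I_d.+1 -> 'rV[F]_d.+1).
Hypothesis dual : forall i j, r i *m c j = (i == j)%:R%:M.
Hypothesis tridiag0 : forall i j : 'I_d.+1,
  (1 < `|(i : int) - (j : int)|)%N -> (r i *m A *m c j) 0 0 = 0.
Hypothesis tridiag1 : forall i j : 'I_d.+1,
  `|(i : int) - (j : int)|%N = 1%N -> (r i *m A *m c j) 0 0 != 0.

Lemma krylov_col_annihilator m (X : 'M[F]_(m, d.+1)) :
  (forall k : 'I_d.+1, X *m A ^+ k *m c ord0 = 0) -> X = 0.
Proof.
move=> killX; apply: trmx_inj; rewrite trmx0.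
have coeffT i j : ((c i)^T *m A^T *m (r j)^T) 0 0 = (r j *m A *m c i) 0 0.
  by rewrite -!trmx_mul mxE mulmxA.
apply: (krylov_row_annihilator (A := A^T)
  (c := fun i => (r i)^T) (r := fun i => (c i)^T)).
- by move=> i j; rewrite -trmx_mul dual tr_scalar_mx eq_sym.
- by move=> i j far; rewrite coeffT tridiag0 // distnC.
- by move=> i j near; rewrite coeffT tridiag1 // distnC.
- by move=> k; rewrite -trmxX -!trmx_mul mulmxA killX trmx0.
Qed.

(* A matrix P commuting with A and satisfying P c_0 r_0 = P c_0 r_0 P is
   0 or 1: otherwise one of the two Krylov bases would be annihilated. *)
Lemma projection_trivial (P : 'M[F]_d.+1) :
  P *m A = A *m P ->
  P *m (c ord0 *m r ord0) = P *m (c ord0 *m r ord0) *m P ->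
  P = 0 \/ P = 1%:M.
Proof.
move=> commPA stableP.
have commPAk k : P *m A ^+ k = A ^+ k *m P by rewrite !mulmxE; apply/commrX.
have [Pc0|Pc_neq0] := eqVneq (P *m c ord0) 0.
  left; apply: krylov_col_annihilator => k.
  by rewrite commPAk -mulmxA Pc0 mulmx0.
right; have r0P : r ord0 *m P = r ord0.
  apply/eqP; rewrite -subr_eq0 -(col_mulmx_eq0 _ Pc_neq0) mulmxBr !mulmxA.
  by rewrite -(mulmxA P) -stableP mulmxA subrr.
apply/eqP; rewrite eq_sym -subr_eq0; apply/eqP.
apply: (krylov_row_annihilator dual tridiag0 tridiag1) => k.
by rewrite mulmxBr mulmx1 -mulmxA -commPAk mulmxA r0P subrr.
Qed.

End Splitting.

Lemma rank1_tridiag_coeffs (F : fieldType) (d : nat)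
    (Estar : 'I_d.+1 -> 'M[F]_d.+1) (A : 'M[F]_d.+1)
    (c : 'I_d.+1 -> 'cV[F]_d.+1) (r : 'I_d.+1 -> 'rV[F]_d.+1) :
  (forall i, Estar i = c i *m r i) ->
  (forall i j, r i *m c j = (i == j)%:R%:M) ->
  (forall i j : 'I_d.+1, (1 < `|(i : int) - (j : int)|)%N ->
     Estar i *m A *m Estar j = 0) ->
  (forall i j : 'I_d.+1, `|(i : int) - (j : int)|%N = 1%N ->
     Estar i *m A *m Estar j != 0) ->
  (forall i j : 'I_d.+1, (1 < `|(i : int) - (j : int)|)%N ->
     (r i *m A *m c j) 0 0 = 0) /\
  (forall i j : 'I_d.+1, `|(i : int) - (j : int)|%N = 1%N ->
     (r i *m A *m c j) 0 0 != 0).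
Proof.
move=> Ecr dual far0 near_neq0.
have coeff_eq0 i j : (Estar i *m A *m Estar j == 0) = ((r i *m A *m c j) 0 0 == 0).
  have [[ci_neq0 _] [_ rj_neq0]] := (dual_basis_neq0 i dual, dual_basis_neq0 j dual).
  by rewrite -(rank1_sandwich_eq0 _ ci_neq0 rj_neq0) !Ecr !mulmxA.
split=> i j dist_ij; last by rewrite -coeff_eq0 near_neq0.
by apply/eqP; rewrite -coeff_eq0 far0.
Qed.

Lemma Delta_closed_cut (F : fieldType) (d : nat) (A : 'M[F]_d.+1)
    (theta : 'I_d.+1 -> F) (Estar : 'I_d.+1 -> 'M[F]_d.+1)
    (thetas : 'I_d.+1 -> F) (S : {set 'I_d.+1}) (i j : 'I_d.+1) :
  (forall k l, k \in S -> Delta_adj A theta Estar thetas k l -> l \in S) ->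
  i \in S -> j \notin S ->
  prim_idem A theta i *m dual_mat Estar thetas *m prim_idem A theta j = 0.
Proof.
move=> closedS iS jNS; have neq_ij : i != j by apply: contraNneq jNS => <-.
apply/eqP; apply: contraNT jNS => edge_ij; apply: closedS iS _.
by rewrite /Delta_adj neq_ij edge_ij.
Qed.

Theorem proposition4p9 (F : fieldType) (d : nat) (hd : (1 <= d)%N)
  (Estar : 'I_(d.+1) -> 'M[F]_(d.+1))
  (hEidem : forall i j : 'I_(d.+1),
     Estar i *m Estar j = if i == j then Estar i else 0)
  (hErank : forall i : 'I_(d.+1), \rank (Estar i) = 1%N)
  (A : 'M[F]_(d.+1))
  (hA0 : forall i j : 'I_(d.+1), (1 < `|(i : int) - (j : int)|)%N ->
     Estar i *m A *m Estar j = 0)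
  (hA1 : forall i j : 'I_(d.+1), `|(i : int) - (j : int)|%N = 1%N ->
     Estar i *m A *m Estar j != 0)
  (theta : 'I_(d.+1) -> F) (htheta_inj : injective theta)
  (htheta_eig : forall i : 'I_(d.+1), eigenvalue A (theta i))
  (thetas : 'I_(d.+1) -> F)
  (hthetas : forall i : 'I_(d.+1), (1 <= i)%N -> thetas i != thetas ord0) :
  graph_connected (Delta_adj A theta Estar thetas).
Proof.
have [v eigv] := left_eigenbasis htheta_eig.
have v_eigen k := (eigv k).1; have v_neq0 k := (eigv k).2.
have orthE := prim_idem_orth htheta_inj v_eigen v_neq0.
have [c [r [Ecr dual]]] := rank1_dual_basis hEidem hErank.
have [tridiag0 tridiag1] := rank1_tridiag_coeffs Ecr dual hA0 hA1.
have Estar0 : prim_idem (dual_mat Estar thetas) thetas ord0 = c ord0 *m r ord0.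
  rewrite dual_mat_prim_idem ?Ecr // => [|j]; last first.
    by rewrite -val_eqE -lt0n; apply: hthetas.
  by rewrite -(dual_basis_sum dual); apply: eq_bigr => k _; apply: Ecr.
move=> x y; apply: contraT => not_xy.
pose S := [set z | connect (Delta_adj A theta Estar thetas) x z].
have closedS k l : k \in S -> Delta_adj A theta Estar thetas k l -> l \in S.
  by rewrite !inE => xk /connect1; apply: connect_trans.
pose P := \sum_(i in S) prim_idem A theta i.
have commPA : P *m A = A *m P.
  exact: partial_sum_comm (prim_idem_commA htheta_inj v_eigen v_neq0).
have stableP : P *m (c ord0 *m r ord0) = P *m (c ord0 *m r ord0) *m P.
  rewrite -Estar0; apply: prim_idem_left_stable; first exact: partial_sum_idem.
  apply: partial_sum_cut (prim_idem_sum htheta_inj v_eigen v_neq0) _ => i j.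
  exact: Delta_closed_cut.
have [P0|P1] := projection_trivial dual tridiag0 tridiag1 commPA stableP.
- have := prim_idem_neq0 htheta_inj v_eigen v_neq0 x.
  by rewrite -(@partial_sum_mem _ _ _ _ orthE S) ?inE // -/P P0 mul0mx eqxx.
- have := prim_idem_neq0 htheta_inj v_eigen v_neq0 y.
  by rewrite -[prim_idem A theta y]mul1mx -P1 partial_sum_nmem ?inE ?eqxx.
Qed.
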